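(* Let $G$ be a group whose abelianization $G_{ab}$ is finitely generated, and let $\bar G=G_{ab}/G_{ab}^{torsion}$. Then there is a generating set $\bar S$ for $\bar G$ and a weight function $\bar f:\bar S\to\mathbb N^+$ such that $\alpha_1(\bar G,L_{\bar G})$ is injective, where $L_{\bar G}$ is the word-length function determined by $\bar f$.
   Context: The word-length function determined by a generating set $\bar S$ and $\bar f:\bar S\to\mathbb N^+$ is $L(g)=\min\{\sum_i\bar f(x_i): g=x_1^{\pm1}\cdots x_r^{\pm1},x_i\in\bar S\}$. For a group $G$ with word-length function $L$, $PH^*(G;\mathbb Q)$ is the cohomology of the subcomplex of the bar cochain complex $\mathrm{Hom}_G(C_*(EG;\mathbb Q),\mathbb Q)$ of $G$-equivariant cochains $\psi$ with $|\psi(1,g_1,\dots,g_n)|\le C(1+\sum_iL(g_i))^k$ for some $C,k$. The inclusion induces $\eta:PH^*(G;\mathbb Q)\to H^*(G;\mathbb Q)$, and $\alpha_*(G,L)$ is the composite $H_*(G;\mathbb Q)\to(H^*(G;\mathbb Q))^*\xrightarrow{\eta^*}(PH^*(G;\mathbb Q))^*$. *)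

From mathcomp Require Import all_boot all_order all_algebra.
From Stdlib Require Import ClassicalDescription.
Set Implicit Arguments. Unset Strict Implicit. Unset Printing Implicit Defensive.
Import Order.TTheory GRing.Theory Num.Theory.

Section GroupNotions.
Local Open Scope group_scope.
Variable G : groupType.

Definition in_commutator_subgroup (g : G) : Prop :=
  exists ps : seq (G * G),
    g = foldr (fun p acc => [~ p.1, p.2] * acc) 1 ps.

Definition gprod (w : seq G) : G := foldr (fun x acc => x * acc) 1 w.

(* G_ab is finitely generated: there is a finite s whose images in G_ab
   generate G_ab, i.e. every g is, modulo [G,G], a product of elements
   of s and their inverses. *)
Definition abelianization_fg : Prop :=
  exists s : seq G, forall g : G, exists w : seq G,
    all (fun x => (x \in s) || (x^-1 \in s)) w /\
    in_commutator_subgroup (g / gprod w).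

(* g maps to a torsion element of G_ab, i.e. g is in the kernel of
   G -> G_ab -> G_ab / G_ab^{torsion}. *)
Definition torsion_mod_commutator (g : G) : Prop :=
  exists k : nat, (0 < k)%N /\ in_commutator_subgroup (g ^+ k).

End GroupNotions.

(* A realization of  Gbar = G_ab / G_ab^{torsion}: a surjective group
   homomorphism pi : G -> Gbar whose kernel is exactly the preimage of
   the torsion of G_ab. *)
Definition is_Gab_mod_torsion (G Gbar : groupType) (pi : G -> Gbar) : Prop :=
  [/\ (forall x y : G, pi (x * y)%g = (pi x * pi y)%g),
      (forall y : Gbar, exists x : G, pi x = y) &
      (forall x : G, pi x = 1%g <-> torsion_mod_commutator x)].

Section WordLength.
Local Open Scope group_scope.
Variable H : groupType.
Variable S : H -> Prop.
Variable f : H -> nat.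

(* a word: letters x^{+1} (true) or x^{-1} (false) with x in S *)
Definition is_word (w : seq (H * bool)) : Prop := forall p, List.In p w -> S p.1.
Definition word_eval (w : seq (H * bool)) : H :=
  foldr (fun p acc => (if p.2 then p.1 else p.1^-1) * acc) 1 w.
Definition word_weight (w : seq (H * bool)) : nat := sumn (map (fun p => f p.1) w).

Definition generates : Prop := forall g : H, exists w, is_word w /\ word_eval w = g.
Definition positive_weights : Prop := forall s, S s -> (0 < f s)%N.

Definition has_word_of_weight (g : H) (n : nat) : Prop :=
  exists w, [/\ is_word w, word_eval w = g & word_weight w = n].

Definition hwow_b (g : H) : pred nat :=
  fun n => is_left (excluded_middle_informative (has_word_of_weight g n)).

Lemma hwow_b_ex (g : H) : (exists n, has_word_of_weight g n) -> exists n, hwow_b g n.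
Proof.
case=> n hn; exists n; rewrite /hwow_b.
by case: (excluded_middle_informative (has_word_of_weight g n)).
Qed.

(* L(g) = min { sum_i f(x_i) : g = x_1^{+-1} ... x_r^{+-1}, x_i in S }
   (set to 0 if g is not a word in S, which never happens when S
   generates). *)
Definition word_length (g : H) : nat :=
  match excluded_middle_informative (exists n, has_word_of_weight g n) with
  | left e => ex_minn (hwow_b_ex e)
  | right _ => 0%N
  end.

End WordLength.

(* An n-simplex of EH is an (n+1)-tuple (x_0,...,x_n) of elements.     *)
Section BarComplex.
Variable H : groupType.

Definition simplex (n : nat) := {ffun 'I_n.+1 -> H}.

Definition face (n : nat) (i : 'I_n.+2) (s : simplex n.+1) : simplex n :=
  [ffun j => s (lift i j)].

Definition sact (n : nat) (g : H) (s : simplex n) : simplex n :=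
  [ffun j => (g * s j)%g].

(* rational n-chains of EH, as finite formal sums *)
Definition chain (n : nat) := seq (rat * simplex n).

Definition coef (n : nat) (c : chain n) (s : simplex n) : rat :=
  (\sum_(p <- c | p.2 == s) p.1)%R.

Definition bnd (n : nat) (c : chain n.+1) : chain n :=
  flatten [seq [seq (((-1) ^+ (nat_of_ord i) * p.1)%R, face i p.2)
                | i : 'I_n.+2 <- enum 'I_n.+2]
          | p : rat * simplex n.+1 <- c].

(* equality in the coinvariants C_n(EH;Q) (x)_H Q: c - c' is a finite
   rational combination of elements g.s - s *)
Definition coinv_eq (n : nat) (c c' : chain n) : Prop :=
  exists r : seq (rat * H * simplex n), forall s : simplex n,
    (coef c s - coef c' s =
     \sum_(p <- r) p.1.1 * ((sact p.1.2 p.2 == s)%:R - (p.2 == s)%:R))%R.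

Definition is_cycle (n : nat) : chain n -> Prop :=
  match n return chain n -> Prop with
  | 0 => fun _ => True
  | m.+1 => fun c => coinv_eq (bnd c) [::]
  end.

Definition is_boundary (n : nat) (c : chain n) : Prop :=
  exists d : chain n.+1, coinv_eq c (bnd d).

Definition equivariant (n : nat) (psi : simplex n -> rat) : Prop :=
  forall (g : H) (s : simplex n), psi (sact g s) = psi s.

Definition is_cocycle (n : nat) (psi : simplex n -> rat) : Prop :=
  forall s : simplex n.+1, (\sum_(i < n.+2) (-1) ^+ i * psi (face i s))%R = 0%R.

Definition poly_bounded (L : H -> nat) (n : nat) (psi : simplex n -> rat) : Prop :=
  exists (C : rat) (k : nat), forall s : simplex n, s ord0 = 1%g ->
    (`|psi s| <= C * (1 + (\sum_(j < n.+1 | j != ord0) L (s j))%:R) ^+ k)%R.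

Definition pairing (n : nat) (psi : simplex n -> rat) (c : chain n) : rat :=
  (\sum_(p <- c) p.1 * psi p.2)%R.

(* alpha_n(H,L) : H_n(H;Q) -> (H^n(H;Q))^* -> (PH^n(H;Q))^* is injective:
   a class [c] is sent to [psi] |-> <psi, c>; it vanishes iff <psi,c> = 0
   for every polynomially bounded equivariant cocycle psi, and then
   [c] must be 0 in H_n, i.e. c is a boundary. *)
Definition alpha_injective (L : H -> nat) (n : nat) : Prop :=
  forall c : chain n, is_cycle c ->
    (forall psi : simplex n -> rat,
        equivariant psi -> is_cocycle psi -> poly_bounded L psi ->
        pairing psi c = 0%R) ->
    is_boundary c.

End BarComplex.

From mathcomp Require Import all_boot all_order all_algebra.
From mathcomp Require Import ring.
From Stdlib Require Import ClassicalDescription.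
From Stdlib Require ClassicalEpsilon.
Set Implicit Arguments. Unset Strict Implicit. Unset Printing Implicit Defensive.
Import Order.TTheory GRing.Theory Num.Theory.
Local Open Scope ring_scope.

(* Take as generating set of Gbar the image of a finite set generating G_ab,
   with unit weights; only the finite generation of Gbar is used.
   Modulo boundaries and coinvariance, every 1-chain is a rational combination
   of the bars [g] = (1, g), and g |-> [g] is additive; over a finite generating
   set ts a class is therefore described by a vector u of Q^ts.  The vectors
   representing null classes form a subspace A, and every functional vanishing
   on A defines a homomorphism phi : H -> Q, which is linearly bounded by the
   word length.  Then t |-> phi (t_0^-1 t_1) is a polynomially bounded
   equivariant 1-cocycle, so a class pairing trivially with all of them has its
   vector in A, i.e. it is null. *)

Lemma closed_pred_rowspace (F : fieldType) n (P : 'rV[F]_n -> Prop) :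
  P 0 -> (forall u v, P u -> P v -> P (u + v)) -> (forall a u, P u -> P (a *: u)) ->
  exists A : 'M[F]_n, forall u, P u <-> (u <= A)%MS.
Proof.
move=> P0 PD PZ.
have P_sub k (M : 'M_(k, n)) u : (forall i, P (row i M)) -> (u <= M)%MS -> P u.
  move=> PM /submxP [D ->]; rewrite mulmx_sum_row.
  by apply: (big_ind P P0 PD) => i _; apply: PZ.
pose spans (r : nat) := exists A : 'M[F]_n, (forall i, P (row i A)) /\ \rank A = r.
pose spansb : pred nat := fun r => is_left (excluded_middle_informative (spans r)).
have spansP r : spansb r <-> spans r by rewrite /spansb; case: excluded_middle_informative.
have spans0 : exists r, spansb r.
  by exists 0%N; apply/spansP; exists 0; split=> [i|]; rewrite ?row0 ?mxrank0.
have spans_le r : spansb r -> (r <= n)%N by move=> /spansP [A [_ <-]]; apply: rank_leq_col.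
(* A has maximal rank among the matrices whose rows all satisfy P. *)
case: (ex_maxnP spans0 spans_le) => r /spansP [A [PA rkA]] maxA.
exists A => u; split => [Pu|]; last exact: P_sub PA.
apply/negPn/negP => uA.
have PAu i : P (row i (A + u)%MS).
  have /sub_addsmxP [[x y] /= ->] := row_sub i (A + u)%MS.
  apply: PD; first exact: P_sub PA (submxMl _ _).
  by apply: P_sub (submxMl _ _) => i'; rewrite row_id.
have := maxA _ (proj2 (spansP _) (ex_intro _ _ (conj PAu erefl))).
rewrite -rkA leqNgt (ltn_leqif (mxrank_leqif_sup (addsmxSl A u))).
by rewrite addsmx_sub submx_refl /= negbK; apply/negP.
Qed.

Section Homologous.
Variable H : groupType.

Definition coinv_sum n (r : seq (rat * H * simplex H n)) (s : simplex H n) : rat :=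
  \sum_(p <- r) p.1.1 * ((sact p.1.2 p.2 == s)%:R - (p.2 == s)%:R).

(* The coefficient functions of the 1-chains that are boundaries in the
   coinvariants C_*(EH;Q) (x)_H Q. *)
Definition homologous0 (F : simplex H 1 -> rat) :=
  exists (d : chain H 2) (r : seq (rat * H * simplex H 1)),
    forall s, F s = coef (bnd d) s + coinv_sum r s.

Lemma coefE n (c : chain H n) s : coef c s = \sum_(p <- c) p.1 * (p.2 == s)%:R.
Proof.
rewrite /coef big_mkcond /=; apply: eq_bigr => p _.
by case: eqP => _; rewrite ?mulr1 ?mulr0.
Qed.

Lemma coef_bnd n (d : chain H n.+1) s :
  coef (bnd d) s = \sum_(p <- d) \sum_(i < n.+2) (-1) ^+ i * p.1 * (face i p.2 == s)%:R.
Proof.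
rewrite coefE /bnd big_flatten big_map /=; apply: eq_bigr => p _.
by rewrite big_map big_enum.
Qed.

Lemma coef_bnd_cat n (d d' : chain H n.+1) s :
  coef (bnd (d ++ d')) s = coef (bnd d) s + coef (bnd d') s.
Proof. by rewrite !coef_bnd big_cat. Qed.

Lemma coef_bnd_scale n a (d : chain H n.+1) s :
  coef (bnd [seq (a * p.1, p.2) | p <- d]) s = a * coef (bnd d) s.
Proof.
rewrite !coef_bnd big_map mulr_sumr; apply: eq_bigr => p _.
by rewrite mulr_sumr; apply: eq_bigr => i _ /=; ring.
Qed.

Lemma coinv_sum_cat n (r r' : seq (rat * H * simplex H n)) s :
  coinv_sum (r ++ r') s = coinv_sum r s + coinv_sum r' s.
Proof. by rewrite /coinv_sum big_cat. Qed.

Lemma coinv_sum_scale n a (r : seq (rat * H * simplex H n)) s :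
  coinv_sum [seq (a * p.1.1, p.1.2, p.2) | p <- r] s = a * coinv_sum r s.
Proof. by rewrite /coinv_sum big_map mulr_sumr; apply: eq_bigr => p _ /=; ring. Qed.

Lemma homologous0_ext F F' : F =1 F' -> homologous0 F -> homologous0 F'.
Proof. by move=> eF [d [r h]]; exists d, r => s; rewrite -eF. Qed.

Lemma homologous0_0 : homologous0 (fun _ => 0).
Proof. by exists [::], [::] => s; rewrite coef_bnd /coinv_sum !big_nil addr0. Qed.

Lemma homologous0_lin a b F F' :
  homologous0 F -> homologous0 F' -> homologous0 (fun s => a * F s + b * F' s).
Proof.
move=> [d [r h]] [d' [r' h']].
exists ([seq (a * p.1, p.2) | p <- d] ++ [seq (b * p.1, p.2) | p <- d']).
exists ([seq (a * p.1.1, p.1.2, p.2) | p <- r] ++ [seq (b * p.1.1, p.1.2, p.2) | p <- r']).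
move=> s; rewrite h h' coef_bnd_cat coinv_sum_cat !coef_bnd_scale !coinv_sum_scale; ring.
Qed.

Lemma homologous0_sum (T : Type) (l : seq T) (F : T -> simplex H 1 -> rat) :
  (forall x, homologous0 (F x)) -> homologous0 (fun s => \sum_(x <- l) F x s).
Proof.
move=> hF; elim: l => [|x l IH].
  by apply: homologous0_ext homologous0_0 => s; rewrite big_nil.
by apply: homologous0_ext (homologous0_lin 1 1 (hF x) IH) => s; rewrite big_cons !mul1r.
Qed.

Lemma homologous0_coef_boundary (c : chain H 1) : homologous0 (coef c) -> is_boundary c.
Proof.
by move=> [d [r h]]; exists d, r => s; rewrite h addrAC subrr add0r.
Qed.

End Homologous.

Section Bars.
Variable H : groupType.

Definition delta n (t s : simplex H n) : rat := (t == s)%:R.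

Definition edge (a b : H) : simplex H 1 := [ffun i : 'I_2 => if val i == 0%N then a else b].

Definition bar (g : H) := delta (edge 1 g).

Definition edge_label (t : simplex H 1) : H := ((t ord0)^-1 * t ord_max)%g.

Lemma homologous0_act q g t :
  homologous0 (fun s => q * (delta (sact g t) s - delta t s)).
Proof. by exists [::], [:: (q, g, t)] => s; rewrite coef_bnd /coinv_sum big_nil big_seq1 add0r. Qed.

Lemma homologous0_bnd (t : simplex H 2) :
  homologous0 (fun s => \sum_(i < 3) (-1) ^+ i * delta (face i t) s).
Proof.
exists [:: (1, t)], [::] => s; rewrite coef_bnd /coinv_sum big_nil big_seq1 addr0.
by apply: eq_bigr => i _; rewrite mulr1.
Qed.

Lemma edgeE (t : simplex H 1) : t = edge (t ord0) (t ord_max).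
Proof.
by apply/ffunP => -[[|[|k]] hk]; rewrite ffunE //=; congr (t _); apply: val_inj.
Qed.

Lemma face_edge (t : simplex H 2) (i : 'I_3) :
  face i t = edge (t (lift i ord0)) (t (lift i ord_max)).
Proof. by rewrite [face i t]edgeE !ffunE. Qed.

Lemma homologous0_edge_bar (t : simplex H 1) :
  homologous0 (fun s => delta t s - bar (edge_label t) s).
Proof.
apply: homologous0_ext (homologous0_act (-1) (t ord0)^-1%g t) => s.
have -> : sact (t ord0)^-1 t = edge 1 (edge_label t).
  by rewrite [sact _ _]edgeE !ffunE mulVg.
by rewrite /bar; ring.
Qed.

(* the boundary of the 2-simplex (1, a, ab) *)
Lemma homologous0_bar_mul (a b : H) :
  homologous0 (fun s => bar a s + bar b s - bar (a * b)%g s).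
Proof.
pose t : simplex H 2 :=
  [ffun i : 'I_3 => if val i == 0%N then 1%g else if val i == 1%N then a else (a * b)%g].
apply: homologous0_ext (homologous0_lin 1 (-1) (homologous0_bnd t)
                          (homologous0_edge_bar (edge a (a * b)%g))) => s.
rewrite !big_ord_recl big_ord0 /edge_label !face_edge !ffunE /= /bump /=.
by rewrite /bar mulKg; ring.
Qed.

Lemma homologous0_bar1 : homologous0 (bar 1%g).
Proof.
by apply: homologous0_ext (homologous0_bar_mul 1%g 1%g) => s; rewrite mulg1; ring.
Qed.

Lemma homologous0_barV x : homologous0 (fun s => bar x^-1%g s + bar x s).
Proof.
apply: homologous0_ext (homologous0_lin 1 1 (homologous0_bar_mul x x^-1%g) homologous0_bar1).
by move=> s; rewrite mulgV; ring.
Qed.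

Definition letter_sign (b : bool) : rat := if b then 1 else -1.

Definition bar_word (w : seq (H * bool)) s := \sum_(p <- w) letter_sign p.2 * bar p.1 s.

Lemma word_eval_cat (w w' : seq (H * bool)) :
  word_eval (w ++ w') = (word_eval w * word_eval w')%g.
Proof. by elim: w => [|p w IH] /=; rewrite ?mul1g // IH mulgA. Qed.

Lemma homologous0_bar_word w : homologous0 (fun s => bar (word_eval w) s - bar_word w s).
Proof.
elim: w => [|[x [|]] w IH].
- by apply: homologous0_ext homologous0_bar1 => s; rewrite /bar_word big_nil subr0.
- apply: homologous0_ext (homologous0_lin (-1) 1 (homologous0_bar_mul x (word_eval w)) IH) => s.
  by rewrite /bar_word big_cons -/(bar_word w s) /=; ring.
- apply: homologous0_ext (homologous0_lin (-1) 1 (homologous0_bar_mul x^-1 (word_eval w))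
                            (homologous0_lin 1 1 (homologous0_barV x) IH)) => s.
  by rewrite /bar_word big_cons -/(bar_word w s) /=; ring.
Qed.

Lemma homologous0_coef_words (c : chain H 1) (wd : H -> seq (H * bool)) :
  (forall g, word_eval (wd g) = g) ->
  homologous0 (fun s => coef c s - \sum_(p <- c) p.1 * bar_word (wd (edge_label p.2)) s).
Proof.
move=> wdE; apply: homologous0_ext (homologous0_sum c (F := fun p s =>
  p.1 * (delta p.2 s - bar (edge_label p.2) s)
  + p.1 * (bar (edge_label p.2) s - bar_word (wd (edge_label p.2)) s)) _) => [s|p].
  by rewrite coefE -sumrB; apply: eq_bigr => p _; rewrite /delta; ring.
apply: homologous0_lin (homologous0_edge_bar p.2) _.
by have := homologous0_bar_word (wd (edge_label p.2)); rewrite wdE.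
Qed.

End Bars.

Section Coordinates.
Variables (H : groupType) (ts : seq H).

Definition coord (w : seq (H * bool)) : 'rV[rat]_(size ts) :=
  \row_l \sum_(p <- w) letter_sign p.2 * (index p.1 ts == l)%:R.

Definition bar_row (u : 'rV[rat]_(size ts)) s :=
  \sum_(l < size ts) u 0 l * bar (nth 1%g ts l) s.

Definition null_row (u : 'rV[rat]_(size ts)) := homologous0 (bar_row u).

Lemma coord_cat w w' : coord (w ++ w') = coord w + coord w'.
Proof. by apply/rowP => l; rewrite !mxE big_cat. Qed.

Lemma bar_row_lin a b u v s : bar_row (a *: u + b *: v) s = a * bar_row u s + b * bar_row v s.
Proof.
rewrite /bar_row !mulr_sumr -big_split /=; apply: eq_bigr => l _.
rewrite !mxE; ring.
Qed.

Lemma bar_row0 s : bar_row 0 s = 0.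
Proof. by rewrite /bar_row big1 // => l _; rewrite mxE mul0r. Qed.

Lemma bar_row_sum (T : Type) (c : seq T) (a : T -> rat) (X : T -> 'rV[rat]_(size ts)) s :
  bar_row (\sum_(p <- c) a p *: X p) s = \sum_(p <- c) a p * bar_row (X p) s.
Proof.
elim: c => [|p c IH]; first by rewrite !big_nil bar_row0.
by rewrite !big_cons -[X in bar_row (_ + X)]scale1r bar_row_lin IH mul1r.
Qed.

Lemma bar_row_coord w : (forall p, List.In p w -> p.1 \in ts) ->
  bar_row (coord w) =1 bar_word w.
Proof.
elim: w => [|p w IH] hw s.
  by rewrite /bar_word big_nil -(bar_row0 s); apply: eq_bigr => l _; rewrite !mxE big_nil.
have hp : p.1 \in ts by apply: hw; left.
rewrite /bar_word big_cons -/(bar_word w s) -IH; last by move=> q hq; apply: hw; right.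
transitivity (\sum_(l < size ts) (letter_sign p.2 * (index p.1 ts == l)%:R * bar (nth 1%g ts l) s
    + coord w 0 l * bar (nth 1%g ts l) s)).
  by apply: eq_bigr => l _; rewrite !mxE big_cons mulrDl.
rewrite big_split /=; congr (_ + _).
rewrite (bigD1 (Ordinal (etrans (index_mem p.1 ts) hp))) //= eqxx nth_index // mulr1.
rewrite big1 ?addr0 // => l hl.
suff -> : (index p.1 ts == l) = false by rewrite mulr0 mul0r.
by apply/negbTE; apply: contra hl => /eqP hl; apply/eqP/val_inj.
Qed.

Lemma null_row0 : null_row 0.
Proof. by apply: homologous0_ext (homologous0_0 H) => s; rewrite bar_row0. Qed.

Lemma null_rowD u v : null_row u -> null_row v -> null_row (u + v).
Proof.
move=> hu hv; apply: homologous0_ext (homologous0_lin 1 1 hu hv) => s.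
by rewrite -bar_row_lin !scale1r.
Qed.

Lemma null_rowZ a u : null_row u -> null_row (a *: u).
Proof.
move=> hu; apply: homologous0_ext (homologous0_lin a 0 hu null_row0) => s.
by rewrite -bar_row_lin scaler0 addr0.
Qed.

Lemma null_row_coordB w w' : (forall p, List.In p w -> p.1 \in ts) ->
  (forall p, List.In p w' -> p.1 \in ts) -> word_eval w = word_eval w' ->
  null_row (coord w - coord w').
Proof.
move=> hw hw' ew.
apply: homologous0_ext (homologous0_lin (-1) 1 (homologous0_bar_word w) (homologous0_bar_word w')).
move=> s; rewrite -scaleN1r -[coord w]scale1r bar_row_lin !bar_row_coord // ew; ring.
Qed.

Lemma coord_mul_bound w (v : 'cV[rat]_(size ts)) :
  `|(coord w *m v) 0 0| <= (size w)%:R * \sum_l `|v l 0|.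
Proof.
elim: w => [|p w IH].
  by rewrite mul0r (_ : coord [::] = 0) ?mul0mx ?mxE //; apply/rowP => l; rewrite !mxE big_nil.
rewrite -cat1s coord_cat mulmxDl mxE (le_trans (ler_normD _ _)) //.
rewrite /= -[(size w).+1]add1n natrD mulrDl lerD // mul1r mxE (le_trans (ler_norm_sum _ _ _)) //.
apply: ler_sum => l _; rewrite mxE big_seq1 !normrM -[leRHS]mul1r ler_wpM2r //.
by case: p.2; case: (_ == _); rewrite /= ?normrN ?normr1 ?normr0 ?mulr1 ?mulr0.
Qed.

End Coordinates.

Section Cocycles.
Variable H : groupType.

Lemma equivariant_edge_label (phi : H -> rat) :
  equivariant (fun t : simplex H 1 => phi (edge_label t)).
Proof. by move=> g t; rewrite /edge_label !ffunE invgM -mulgA mulKg. Qed.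

Lemma cocycle_edge_label (phi : H -> rat) :
  {morph phi : a b / (a * b)%g >-> a + b} ->
  is_cocycle (fun t : simplex H 1 => phi (edge_label t)).
Proof.
move=> phiM s.
have vertexE i j : s (lift i j) = s (inord (bump i j)).
  by congr (s _); apply: val_inj; rewrite /= inordK //; exact: (ltn_ord (lift i j)).
rewrite !big_ord_recl big_ord0 /edge_label !face_edge !ffunE !vertexE /=.
have -> : phi ((s (inord 0))^-1 * s (inord 2))%g =
          phi ((s (inord 0))^-1 * s (inord 1))%g + phi ((s (inord 1))^-1 * s (inord 2))%g.
  by rewrite -phiM -mulgA mulVKg.
rewrite !expr0 !expr1 expr2; ring.
Qed.

Lemma poly_bounded_edge_label (L : H -> nat) (phi : H -> rat) (C : rat) :
  0 <= C -> (forall g, `|phi g| <= C * (L g)%:R) ->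
  poly_bounded L (fun t : simplex H 1 => phi (edge_label t)).
Proof.
move=> C_ge0 phiL; exists C, 1%N => t t0; rewrite expr1 /edge_label t0 invg1 mul1g.
apply: le_trans (phiL _) _; rewrite ler_wpM2l // addrC natr1 ler_nat (bigD1 ord_max) //=.
exact: leq_trans (leq_addr _ _) (leqnSn _).
Qed.

End Cocycles.

Lemma word_length_attained (H : groupType) (S : H -> Prop) (f : H -> nat) :
  generates S -> forall g, exists2 w, is_word S w /\ word_eval w = g &
                                       word_weight f w = word_length S f g.
Proof.
move=> gen g; rewrite /word_length.
case: (excluded_middle_informative (exists n : nat, has_word_of_weight S f g n)) => [ex|nex].
  case: (ex_minnP (hwow_b_ex ex)) => n + _; rewrite /hwow_b.
  case: (excluded_middle_informative (has_word_of_weight S f g n)) => // -[w [hw he hwn]] _;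
    by exists w.
have [w [hw he]] := gen g; case: nex; exists (word_weight f w), w; by split.
Qed.

Lemma word_weight1 (H : groupType) (w : seq (H * bool)) :
  word_weight (fun _ => 1%N) w = size w.
Proof. by elim: w => //= p w; rewrite /word_weight /= => ->. Qed.

Section FinitelyGenerated.
Variables (H : groupType) (ts : seq H).
Hypothesis gen : generates (fun x => x \in ts).

Definition word_of (g : H) : seq (H * bool) :=
  sval (ClassicalEpsilon.constructive_indefinite_description _ (gen g)).

Lemma word_ofP g : is_word (fun x => x \in ts) (word_of g) /\ word_eval (word_of g) = g.
Proof. exact: svalP (ClassicalEpsilon.constructive_indefinite_description _ (gen g)). Qed.

Section RowHomomorphism.
Variable v : 'cV[rat]_(size ts).
Hypothesis v_null : forall u, null_row u -> (u *m v) 0 0 = 0.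

Definition row_hom (g : H) : rat := (coord ts (word_of g) *m v) 0 0.

Lemma row_hom_word w : is_word (fun x => x \in ts) w ->
  row_hom (word_eval w) = (coord ts w *m v) 0 0.
Proof.
move=> hw; have [hwo ewo] := word_ofP (word_eval w).
have := v_null (null_row_coordB hwo hw ewo).
by rewrite mulmxBl mxE [X in _ + X]mxE => /eqP; rewrite subr_eq0 => /eqP.
Qed.

Lemma row_homM : {morph row_hom : a b / (a * b)%g >-> a + b}.
Proof.
move=> a b; have [[wa ea] [wb eb]] := (word_ofP a, word_ofP b).
rewrite -{1}ea -{1}eb -word_eval_cat row_hom_word; last first.
  by move=> p hp; case: (List.in_app_or _ _ _ hp); [apply: wa | apply: wb].
by rewrite coord_cat mulmxDl /row_hom !mxE.
Qed.

Lemma row_hom_bound g :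
  `|row_hom g| <= (\sum_l `|v l 0|) * (word_length (fun x => x \in ts) (fun _ => 1%N) g)%:R.
Proof.
have [w [hw <-] <-] := word_length_attained (fun _ => 1%N) gen g.
by rewrite row_hom_word // word_weight1 mulrC coord_mul_bound.
Qed.

End RowHomomorphism.

Lemma alpha1_injective_generated :
  alpha_injective (word_length (fun x => x \in ts) (fun _ => 1%N)) 1.
Proof.
move=> c _ pairing0.
have [A nullA] := closed_pred_rowspace (@null_row0 _ ts) (@null_rowD _ ts) (@null_rowZ _ ts).
pose u := \sum_(p <- c) p.1 *: coord ts (word_of (edge_label p.2)).
have c_u : homologous0 (fun s => coef c s - bar_row u s).
  apply: homologous0_ext (homologous0_coef_words c (fun g => (word_ofP g).2)) => s.
  rewrite bar_row_sum; congr (_ - _); apply: eq_bigr => p _.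
  by rewrite bar_row_coord // => q; apply: (word_ofP _).1.
suff /nullA u_null : (u <= A)%MS.
  apply: homologous0_coef_boundary.
  by apply: homologous0_ext (homologous0_lin 1 1 c_u u_null) => s; ring.
rewrite submxE; apply/eqP/rowP => j.
pose v := col j (cokermx A).
have entry (X : 'rV[rat]_(size ts)) : (X *m cokermx A) 0 j = (X *m v) 0 0.
  by rewrite !mxE; apply: eq_bigr => l _; rewrite !mxE.
have v_null u' : null_row u' -> (u' *m v) 0 0 = 0.
  by move=> /nullA; rewrite submxE => /eqP uK; rewrite -entry uK mxE.
rewrite entry [RHS]mxE; transitivity (pairing (fun t => row_hom v (edge_label t)) c).
  rewrite /pairing /u mulmx_suml summxE; apply: eq_bigr => p _.
  by rewrite -scalemxAl mxE.
apply: pairing0; first exact: equivariant_edge_label.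
  exact: cocycle_edge_label (row_homM v_null).
apply: poly_bounded_edge_label (row_hom_bound v_null).
by apply: sumr_ge0 => l _; apply: normr_ge0.
Qed.

End FinitelyGenerated.

Lemma Gab_mod_torsion_finitely_generated (G Gbar : groupType) (pi : G -> Gbar) :
  abelianization_fg G -> is_Gab_mod_torsion pi ->
  exists ts : seq Gbar, generates (fun x => x \in ts).
Proof.
move=> [s gen_s] [piM pi_surj pi_ker].
have pi1 : pi 1%g = 1%g by apply: (@mulgI _ (pi 1%g)); rewrite -piM !mulg1.
have piV x : pi x^-1%g = (pi x)^-1%g by apply: (@mulgI _ (pi x)); rewrite -piM !mulgV.
pose letter (z : G) := if z \in s then (pi z, true) else (pi z^-1%g, false).
have eval_letters w : word_eval (map letter w) = pi (gprod w).
  elim: w => [|z w IH] /=; first by rewrite pi1.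
  by rewrite piM IH /letter; case: (z \in s) => //=; rewrite piV invgK.
exists (map pi s) => y; have [x <-] := pi_surj y; have [w [w_s xw]] := gen_s x.
exists (map letter w); split.
  move=> p; elim: w w_s {xw} => [|z w IH] //= /andP [zs w_s] [<-|]; last exact: IH.
  by rewrite /letter; case: ifP zs => /= [zs _|_ zs]; apply: map_f.
have : pi (x / gprod w)%g = 1%g by apply/pi_ker; exists 1%N; rewrite expg1.
by rewrite piM piV => /divg1_eq ->; apply: eval_letters.
Qed.

Theorem lemma1p4p1 (G : groupType) (hG : abelianization_fg G)
  (Gbar : groupType) (pi : G -> Gbar) (hpi : is_Gab_mod_torsion pi) :
  exists (S : Gbar -> Prop) (f : Gbar -> nat),
    [/\ generates S, positive_weights S f &
        alpha_injective (word_length S f) 1].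
Proof.
have [ts gen] := Gab_mod_torsion_finitely_generated hG hpi.
exists (fun x => x \in ts), (fun _ => 1%N); split => //.
exact: alpha1_injective_generated.
Qed.
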